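(* Let $0<\rho_1<\rho_2=1$, $\alpha=\frac{\rho_2-\rho_1}{\rho_2+\rho_1}$, $\kappa=\frac{\alpha+1}{\alpha}$, and let $F$ be a $C^2$ function on $(-1,1)$. Let $(\mathbf{u},p,\phi,\mu)$ be a smooth solution on $\mathbb{T}^3\times(0,T)$ of \begin{align*} &\partial_t(\rho\mathbf{u})+\operatorname{div}(\rho\mathbf{u}\otimes\mathbf{u})+\nabla p=\operatorname{div}(\rho\,\mathbb{D}\mathbf{u})-\phi\nabla\mu,\qquad \partial_t\rho+\operatorname{div}(\rho\mathbf{u})=0,\\ &\partial_t\phi+\operatorname{div}(\phi\mathbf{u})=\Delta(\mu+\alpha p),\qquad \mu=-\Delta\phi+F'(\phi), \end{align*} where $\rho=\rho_1\frac{1+\phi}{2}+\rho_2\frac{1-\phi}{2}$ and $\phi$ takes values in $(-1,1)$. Set $\mu_p=\mu+\alpha p$ and $\widetilde{F}(r)=F(-\kappa r+\kappa-1)$. Then for all $t\in(0,T)$, \begin{align*} &\frac{\mathrm{d}}{\mathrm{d}t}\int_{\mathbb{T}^3}\Big(\frac{\rho}{2}|\mathbf{u}+\nabla\ln\rho|^2+\frac12|\nabla\phi|^2+F(\phi)-\frac{1}{\alpha^2}\ln\rho\Big)\mathrm{d}x+\int_{\mathbb{T}^3}|\nabla\mu_p|^2\,\mathrm{d}x\\ &\quad+\int_{\mathbb{T}^3}\widetilde{F}''(\rho)|\nabla\rho|^2\,\mathrm{d}x+\kappa^2\int_{\mathbb{T}^3}|\Delta\rho|^2\,\mathrm{d}x+\frac14\int_{\mathbb{T}^3}\rho\,|\nabla\mathbf{u}-(\nabla\mathbf{u})^\top|^2\,\mathrm{d}x=0.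 \end{align*}
   Context: $\mathbb{T}^3=\mathbb{R}^3/\mathbb{Z}^3$ with periodic boundary conditions; $\mathbb{D}\mathbf{u}=\frac12(\nabla\mathbf{u}+(\nabla\mathbf{u})^\top)$. Note that $\phi=-\kappa\rho+\kappa-1$ is the inverse of the density relation, and $\phi\in(-1,1)$ implies $\rho_1<\rho<1$. *)

From Stdlib Require Import Reals Lra List.
From Coquelicot Require Import Coquelicot.
Open Scope R_scope.

(* A scalar field on R^3 x R : arguments (x1, x2, x3, t). *)
Definition fld := R -> R -> R -> R -> R.

(* Partial derivative: k = 0,1,2 spatial directions x1,x2,x3; any other k = time. *)
Definition pd (k : nat) (f : fld) : fld :=
  fun a b c t => match k with
  | 0%nat => Derive (fun s => f s b c t) a
  | 1%nat => Derive (fun s => f a s c t) b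
  | 2%nat => Derive (fun s => f a b s t) c
  | _ => Derive (fun s => f a b c s) t
  end.

Definition dt (f : fld) : fld := pd 3 f.

Definition ex_pd (k : nat) (f : fld) (a b c t : R) : Prop :=
  match k with
  | 0%nat => ex_derive (fun s => f s b c t) a
  | 1%nat => ex_derive (fun s => f a s c t) b
  | 2%nat => ex_derive (fun s => f a b s t) c
  | _ => ex_derive (fun s => f a b c s) t
  end.

Fixpoint pdl (l : list nat) (f : fld) : fld :=
  match l with nil => f | k :: l' => pd k (pdl l' f) end.

Definition uncurry4 (f : fld) : R * R * R * R -> R :=
  fun q => match q with (a, b, c, t) => f a b c t end.

Definition smooth_on (U : R -> R -> R -> R -> Prop) (f : fld) : Prop :=
  forall (l : list nat) (a b c t : R), U a b c t ->
    continuous (uncurry4 (pdl l f)) (a, b, c, t) /\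
    forall k, ex_pd k (pdl l f) a b c t.

Definition slab (T : R) : R -> R -> R -> R -> Prop := fun _ _ _ t => 0 < t < T.

(* 1-periodicity in each space variable: functions on T^3 = R^3/Z^3. *)
Definition periodic (f : fld) : Prop :=
  forall a b c t, f (a + 1) b c t = f a b c t /\ f a (b + 1) c t = f a b c t /\
                  f a b (c + 1) t = f a b c t.

Definition C2_on_m11 (F : R -> R) : Prop :=
  forall r, -1 < r < 1 ->
    ex_derive F r /\ ex_derive (Derive F) r /\ continuous (Derive_n F 2) r.

Definition sum3 (g : nat -> R) : R := g 0%nat + g 1%nat + g 2%nat.

Definition lap (f : fld) : fld := fun a b c t => sum3 (fun j => pd j (pd j f) a b c t).

(* Integral over the torus T^3 (fundamental domain [0,1]^3), iterated. *)
Definition Int3 (g : R -> R -> R -> R) : R :=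
  RInt (fun a => RInt (fun b => RInt (fun c => g a b c) 0 1) 0 1) 0 1.

Definition rho2 : R := 1.
Definition alpha (rho1 : R) : R := (rho2 - rho1) / (rho2 + rho1).
Definition kappa (rho1 : R) : R := (alpha rho1 + 1) / alpha rho1.

Definition dens (rho1 : R) (phi : fld) : fld :=
  fun a b c t => rho1 * (1 + phi a b c t) / 2 + rho2 * (1 - phi a b c t) / 2.

Definition Ftilde (rho1 : R) (F : R -> R) : R -> R :=
  fun r => F (- kappa rho1 * r + kappa rho1 - 1).

Definition energy (rho1 : R) (F : R -> R) (u : nat -> fld) (phi : fld) (t : R) : R :=
  let rho := dens rho1 phi in
  Int3 (fun a b c =>
    rho a b c t / 2 *
      sum3 (fun j => (u j a b c t + pd j (fun a' b' c' t' => ln (rho a' b' c' t')) a b c t) ^ 2)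
    + 1 / 2 * sum3 (fun j => (pd j phi a b c t) ^ 2)
    + F (phi a b c t)
    - 1 / (alpha rho1) ^ 2 * ln (rho a b c t)).

Definition dissipation (rho1 : R) (F : R -> R) (u : nat -> fld) (p phi mu : fld) (t : R) : R :=
  let rho := dens rho1 phi in
  let mup : fld := fun a b c t => mu a b c t + alpha rho1 * p a b c t in
  Int3 (fun a b c => sum3 (fun j => (pd j mup a b c t) ^ 2))
  + Int3 (fun a b c => Derive_n (Ftilde rho1 F) 2 (rho a b c t) *
                        sum3 (fun j => (pd j rho a b c t) ^ 2))
  + (kappa rho1) ^ 2 * Int3 (fun a b c => (lap rho a b c t) ^ 2)
  + 1 / 4 * Int3 (fun a b c => rho a b c t *
       sum3 (fun i => sum3 (fun j => (pd j (u i) a b c t - pd i (u j) a b c t) ^ 2))).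

(* Let e be the energy density and d the dissipation density. Using the four equations to
   eliminate the time derivatives of u and phi, one checks pointwise on T^3 x (0,T) that
   dt e + d = sum_j pd_j Psi_j for an explicit flux Psi. All quantities involved are
   polynomials in partial derivatives of u, p, phi, mu and in rho, 1/rho, ln rho, F(phi),
   F'(phi), F''(phi), so this is done by formal differentiation (justified by smoothness and
   Schwarz's theorem) followed by a rational identity. Integrating over the unit cube, the
   divergences vanish by periodicity, and differentiation under the integral sign, licensed
   by the joint continuity of the integrands and of their time derivatives, turns the
   pointwise balance into dE/dt = -D. *)

From Stdlib Require Import Reals Lra Lia List FunctionalExtensionality IndefiniteDescription.
From Coquelicot Require Import Coquelicot.
Import ListNotations.
Open Scope R_scope.

Arguments pd : simpl never.

(** * Coordinates and smooth fields *)

Definition point := (R * R * R * R)%type.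

Definition set_coord (k : nat) (q : point) (s : R) : point :=
  match q with (a, b, c, t) =>
  match k with 0%nat => (s, b, c, t) | 1%nat => (a, s, c, t) | 2%nat => (a, b, s, t)
  | _ => (a, b, c, s) end end.

Definition coord (k : nat) (q : point) : R :=
  match q with (a, b, c, t) =>
  match k with 0%nat => a | 1%nat => b | 2%nat => c | _ => t end end.

Definition time_of (q : point) : R := snd q.

(* Every index [k >= 3] denotes the time direction. *)
Definition axis (k : nat) : nat := Nat.min k 3.

Ltac destruct_axis k := destruct k as [|[|[|k]]].

Ltac by_axes :=
  intros;
  repeat match goal with
  | q : point |- _ => destruct q as [[[? ?] ?] ?]
  | q : (R * R * R * R)%type |- _ => destruct q as [[[? ?] ?] ?] end;
  unfold axis in *; simpl in *; try reflexivity;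
  try (exfalso; match goal with H : _ <> _ |- _ => apply H end; lia).

Lemma pd_set_coord k f q :
  uncurry4 (pd k f) q = Derive (fun s => uncurry4 f (set_coord k q s)) (coord k q).
Proof. destruct_axis k; by_axes. Qed.

Lemma ex_pd_set_coord k f a b c t :
  ex_pd k f a b c t <->
  ex_derive (fun s => uncurry4 f (set_coord k (a, b, c, t) s)) (coord k (a, b, c, t)).
Proof. destruct_axis k; reflexivity. Qed.

Lemma set_coord_id k q : set_coord k q (coord k q) = q.
Proof. destruct_axis k; by_axes. Qed.

Lemma set_coord_set_coord k q s r : set_coord k (set_coord k q s) r = set_coord k q r.
Proof. destruct_axis k; by_axes. Qed.

Lemma coord_set_coord k q s : coord k (set_coord k q s) = s.
Proof. destruct_axis k; by_axes. Qed.

Lemma coord_set_coord_ne j k q s : axis j <> axis k -> coord k (set_coord j q s) = coord k q.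
Proof. destruct_axis j; destruct_axis k; by_axes. Qed.

Lemma set_coordC j k q s r : axis j <> axis k ->
  set_coord k (set_coord j q s) r = set_coord j (set_coord k q r) s.
Proof. destruct_axis j; destruct_axis k; by_axes. Qed.

Lemma pd_axis j g : pd j g = pd (axis j) g.
Proof. destruct_axis j; by_axes. Qed.

Lemma pdl_app l1 l2 f : pdl (l1 ++ l2) f = pdl l1 (pdl l2 f).
Proof. induction l1 as [|k l1 IH]; simpl; congruence. Qed.

Lemma continuous_pair {U V W : UniformSpace} (f : U -> V) (g : U -> W) x :
  continuous f x -> continuous g x -> continuous (fun z => (f z, g z)) x.
Proof.
  intros Hf Hg P [eps HP]. unfold filtermap.
  apply (filter_imp (fun z => ball (f x) eps (f z) /\ ball (g x) eps (g z))).
  - intros z [Hz1 Hz2]. now apply HP.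
  - apply filter_and; [apply Hf | apply Hg]; apply locally_ball.
Qed.

Ltac continuity_proj := repeat (match goal with
 | |- continuous (fun _ => (_, _)) _ => apply continuous_pair
 | |- continuous (pair ?u) ?p => apply (continuous_pair (fun _ => u) (fun z => z) p)
 | |- continuous (fun _ => ?c) _ => apply continuous_const
 | |- continuous (fun z => z) _ => apply continuous_id
 | |- continuous (fun z => fst z) _ => cbn [fst snd]; apply continuous_fst
 | |- continuous (fun z => snd z) _ => cbn [fst snd]; apply continuous_snd
 | |- continuous (fun z => fst (@?G z)) ?p => apply (continuous_comp G fst p)
 | |- continuous (fun z => snd (@?G z)) ?p => apply (continuous_comp G snd p)
 | |- continuous fst _ => cbn [fst snd]; apply continuous_fst
 | |- continuous snd _ => cbn [fst snd]; apply continuous_snd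
 end).

Lemma continuous_set_coord2 j k q (z : R * R) :
  continuous (fun z : R * R => set_coord j (set_coord k q (snd z)) (fst z)) z.
Proof. destruct z; destruct_axis j; destruct_axis k; by_axes; continuity_proj. Qed.

Lemma ball_R (x e y : R) : ball x e y <-> Rabs (y - x) < e.
Proof. reflexivity. Qed.

Lemma locally_time_slab (T t : R) : 0 < t < T -> locally t (fun s => 0 < s < T).
Proof.
  intros Ht. apply (open_and (fun s => 0 < s) (fun s => s < T)); [apply open_gt | apply open_lt | exact Ht].
Qed.

Lemma locally_time_interval {Y : UniformSpace} (T : R) (y : Y) (t : R) : 0 < t < T ->
  locally (y, t) (fun z : Y * R => 0 < snd z < T).
Proof. intros Ht. exact (continuous_snd y t _ (locally_time_slab T t Ht)). Qed.

Ltac by_point := intros [[[? ?] ?] ?]; reflexivity.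
Ltac by_line := intros ?s; destruct (set_coord _ _ s) as [[[? ?] ?] ?]; reflexivity.

Lemma is_derive_line_plus (f g f' g' : fld) k q :
  is_derive (fun s => uncurry4 f (set_coord k q s)) (coord k q) (uncurry4 f' q) ->
  is_derive (fun s => uncurry4 g (set_coord k q s)) (coord k q) (uncurry4 g' q) ->
  is_derive (fun s => uncurry4 (fun a b c t => f a b c t + g a b c t) (set_coord k q s)) (coord k q)
    (uncurry4 (fun a b c t => f' a b c t + g' a b c t) q).
Proof.
  intros Hf Hg.
  apply (is_derive_ext (fun s => uncurry4 f (set_coord k q s) + uncurry4 g (set_coord k q s))); [by_line|].
  replace (uncurry4 (fun a b c t => f' a b c t + g' a b c t) q) with (plus (uncurry4 f' q) (uncurry4 g' q))
    by now destruct q as [[[? ?] ?] ?].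
  now apply (is_derive_plus (V := R_NormedModule)).
Qed.

Lemma is_derive_line_mult (f g f' g' : fld) k q :
  is_derive (fun s => uncurry4 f (set_coord k q s)) (coord k q) (uncurry4 f' q) ->
  is_derive (fun s => uncurry4 g (set_coord k q s)) (coord k q) (uncurry4 g' q) ->
  is_derive (fun s => uncurry4 (fun a b c t => f a b c t * g a b c t) (set_coord k q s)) (coord k q)
    (uncurry4 (fun a b c t => f' a b c t * g a b c t + f a b c t * g' a b c t) q).
Proof.
  intros Hf Hg.
  apply (is_derive_ext (fun s => uncurry4 f (set_coord k q s) * uncurry4 g (set_coord k q s))); [by_line|].
  replace (uncurry4 (fun a b c t => f' a b c t * g a b c t + f a b c t * g' a b c t) q)
    with (plus (mult (uncurry4 f' q) (uncurry4 g (set_coord k q (coord k q))))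
               (mult (uncurry4 f (set_coord k q (coord k q))) (uncurry4 g' q)))
    by (rewrite set_coord_id; now destruct q as [[[? ?] ?] ?]).
  apply (is_derive_mult (K := R_AbsRing)); auto. intros; apply Rmult_comm.
Qed.

Section Smooth.
Variable T : R.

Definition in_slab (q : point) : Prop := 0 < time_of q < T.
Definition smooth (f : fld) : Prop := smooth_on (slab T) f.

Lemma smooth_pdl l f : smooth f -> smooth (pdl l f).
Proof. intros H l' a b c t Ht. rewrite <- pdl_app. now apply H. Qed.

Lemma smooth_continuous f q : smooth f -> in_slab q -> continuous (uncurry4 f) q.
Proof. destruct q as [[[a b] c] t]. intros H Hq. exact (proj1 (H nil a b c t Hq)). Qed.

Lemma smooth_is_derive_line f k q : smooth f -> in_slab q ->
  is_derive (fun s => uncurry4 f (set_coord k q s)) (coord k q) (uncurry4 (pd k f) q).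
Proof.
  destruct q as [[[a b] c] t]. intros H Hq. rewrite pd_set_coord. apply Derive_correct.
  apply ex_pd_set_coord. exact (proj2 (H nil a b c t Hq) k).
Qed.

Lemma in_slab_near j k q u v : in_slab q ->
  Rabs (u - coord j q) < Rmin (time_of q) (T - time_of q) ->
  Rabs (v - coord k q) < Rmin (time_of q) (T - time_of q) ->
  in_slab (set_coord j (set_coord k q v) u).
Proof.
  destruct q as [[[a b] c] t]. unfold in_slab, time_of; simpl. intros Ht Hu Hv.
  pose proof (Rmin_l t (T - t)). pose proof (Rmin_r t (T - t)).
  apply Rabs_def2 in Hu, Hv.
  destruct_axis j; destruct_axis k; simpl in *; lra.
Qed.

Section Slice.
Variables (j k : nat) (q : point).
Hypothesis Hjk : axis j <> axis k.

Definition slice2 (g : fld) (s r : R) : R := uncurry4 g (set_coord j (set_coord k q r) s).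

Lemma slice2_pd_fst g s r : slice2 (pd j g) s r = Derive (fun s => slice2 g s r) s.
Proof.
  unfold slice2. rewrite pd_set_coord, coord_set_coord.
  apply Derive_ext. intros s'. now rewrite set_coord_set_coord.
Qed.

Lemma slice2_pd_snd g s r : slice2 (pd k g) s r = Derive (fun r => slice2 g s r) r.
Proof.
  unfold slice2. rewrite pd_set_coord, coord_set_coord_ne, coord_set_coord by exact Hjk.
  apply Derive_ext. intros r'. now rewrite set_coordC, set_coord_set_coord.
Qed.

Lemma slice2_ex_derive_fst g s r : smooth g -> in_slab (set_coord j (set_coord k q r) s) ->
  ex_derive (fun s => slice2 g s r) s.
Proof.
  intros Hg Hq. eexists. pose proof (smooth_is_derive_line g j _ Hg Hq) as H.
  rewrite coord_set_coord in H. eapply is_derive_ext; [|exact H].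
  intros s'. unfold slice2. now rewrite set_coord_set_coord.
Qed.

Lemma slice2_ex_derive_snd g s r : smooth g -> in_slab (set_coord j (set_coord k q r) s) ->
  ex_derive (fun r => slice2 g s r) r.
Proof.
  intros Hg Hq. eexists. pose proof (smooth_is_derive_line g k _ Hg Hq) as H.
  rewrite coord_set_coord_ne, coord_set_coord in H by exact Hjk.
  eapply is_derive_ext; [|exact H].
  intros r'. unfold slice2. now rewrite set_coordC, set_coord_set_coord.
Qed.

Lemma slice2_continuous g : smooth g -> in_slab q ->
  continuity_2d_pt (slice2 g) (coord j q) (coord k q).
Proof.
  intros Hg Hq. apply continuity_2d_pt_filterlim.
  assert (Hc : set_coord j (set_coord k q (coord k q)) (coord j q) = q)
    by now rewrite !set_coord_id.
  assert (C : continuous (fun z : R * R => uncurry4 g (set_coord j (set_coord k q (snd z)) (fst z)))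
                (coord j q, coord k q)).
  { apply (continuous_comp (fun z : R * R => set_coord j (set_coord k q (snd z)) (fst z)) (uncurry4 g)).
    - apply continuous_set_coord2.
    - cbn [fst snd]. rewrite Hc. now apply smooth_continuous. }
  unfold continuous in C. cbn [fst snd] in C. rewrite Hc in C.
  unfold slice2. rewrite Hc. exact C.
Qed.

End Slice.

Lemma pd_comm j k f a b c t : smooth f -> 0 < t < T ->
  pd j (pd k f) a b c t = pd k (pd j f) a b c t.
Proof.
  intros Hf Ht.
  destruct (Nat.eq_dec (axis j) (axis k)) as [E|NE].
  { assert (Hjk : forall g, pd j g = pd k g) by (intros g; now rewrite pd_axis, E, <- pd_axis).
    now rewrite !Hjk. }
  assert (NE' : axis k <> axis j) by auto.
  set (q := (a, b, c, t)). assert (Hq : in_slab q) by exact Ht.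
  set (S := slice2 j k q).
  assert (Lhs : forall g, pd j (pd k g) a b c t = S (pd j (pd k g)) (coord j q) (coord k q))
    by (intros g; unfold S, slice2; now rewrite !set_coord_id).
  assert (Rhs : forall g, pd k (pd j g) a b c t = S (pd k (pd j g)) (coord j q) (coord k q))
    by (intros g; unfold S, slice2; now rewrite !set_coord_id).
  assert (Ejk : forall s r, S (pd j (pd k f)) s r = Derive (fun s => Derive (fun r => S f s r) r) s).
  { intros s r. unfold S. rewrite slice2_pd_fst.
    apply Derive_ext. intros s'. now apply slice2_pd_snd. }
  assert (Ekj : forall s r, S (pd k (pd j f)) s r = Derive (fun r => Derive (fun s => S f s r) s) r).
  { intros s r. unfold S. rewrite slice2_pd_snd by exact NE.
    apply Derive_ext. intros r'. apply slice2_pd_fst. }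
  rewrite Lhs, Rhs, Ejk, Ekj.
  apply Schwarz.
  - assert (Hpos : 0 < Rmin (time_of q) (T - time_of q)) by (apply Rmin_pos; unfold q, time_of; simpl; lra).
    exists (mkposreal _ Hpos). intros s r Hs Hr.
    pose proof (in_slab_near j k q s r Hq Hs Hr) as Hsr.
    unfold S. repeat split.
    + now apply slice2_ex_derive_fst.
    + now apply slice2_ex_derive_snd.
    + eapply ex_derive_ext; [intros s'; apply slice2_pd_snd; exact NE|].
      apply slice2_ex_derive_fst; [now apply smooth_pdl with (l := k :: nil) | exact Hsr].
    + eapply ex_derive_ext; [intros r'; apply slice2_pd_fst|].
      apply slice2_ex_derive_snd; [exact NE | now apply smooth_pdl with (l := j :: nil) | exact Hsr].
  - apply (continuity_2d_pt_ext (S (pd j (pd k f)))); [exact Ejk|].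
    apply slice2_continuous; [now apply smooth_pdl with (l := j :: k :: nil) | exact Hq].
  - apply (continuity_2d_pt_ext (S (pd k (pd j f)))); [exact Ekj|].
    apply slice2_continuous; [now apply smooth_pdl with (l := k :: j :: nil) | exact Hq].
Qed.

Lemma locally_in_slab q : in_slab q -> locally q in_slab.
Proof. destruct q as [[[a b] c] t]. apply locally_time_interval. Qed.

Lemma pd_ext_slab k g h a b c t :
  (forall a b c t, 0 < t < T -> g a b c t = h a b c t) -> 0 < t < T ->
  pd k g a b c t = pd k h a b c t.
Proof.
  intros H Ht. destruct_axis k; unfold pd; try (apply Derive_ext; intros s; now apply H).
  apply Derive_ext_loc. apply (filter_imp _ _ (fun s Hs => H a b c s Hs)), locally_time_slab, Ht.
Qed.

Lemma ex_pd_ext_slab k g h a b c t :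
  (forall a b c t, 0 < t < T -> g a b c t = h a b c t) -> 0 < t < T ->
  ex_pd k g a b c t -> ex_pd k h a b c t.
Proof.
  intros H Ht. destruct_axis k; unfold ex_pd; try (apply ex_derive_ext; intros s; now apply H).
  apply ex_derive_ext_loc. apply (filter_imp _ _ (fun s Hs => H a b c s Hs)), locally_time_slab, Ht.
Qed.

Lemma continuous_ext_slab (g h : fld) q :
  (forall a b c t, 0 < t < T -> g a b c t = h a b c t) -> in_slab q ->
  continuous (uncurry4 g) q -> continuous (uncurry4 h) q.
Proof.
  intros H Hq Hg. apply (filterlim_ext_loc (uncurry4 g)).
  - apply (filter_imp in_slab); [|now apply locally_in_slab].
    intros [[[a' b'] c'] t'] Hq'. now apply H.
  - destruct q as [[[a b] c] t]. simpl. rewrite <- (H a b c t Hq). exact Hg.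
Qed.

End Smooth.

(** * Symbolic differentiation *)

(* [ERho], [ERhoInv], [ELnRho] stand for rho, 1/rho, ln rho, where rho is the density of phi,
   and [EF0], [EF1], [EF2] for F, F', F'' at phi. *)
Inductive term : Type :=
| EPd (f : fld) (l : list nat)
| ECst (r : R)
| EAdd (x y : term)
| EMul (x y : term)
| ERho | ERhoInv | ELnRho | EF0 | EF1 | EF2.

(* Derivative indices are kept sorted, so that mixed partials which agree by
   Schwarz's theorem are represented by the same expression. *)
Fixpoint insert_index (k : nat) (l : list nat) : list nat :=
  match l with
  | nil => k :: nil
  | m :: l' => if Nat.leb k m then k :: m :: l' else m :: insert_index k l'
  end.

Fixpoint term_sum (l : list term) : term :=
  match l with nil => ECst 0 | E :: l' => EAdd E (term_sum l') end.

Section Expressions.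
Variables (T rho1 : R) (F : R -> R) (phi : fld).

Definition dens_of (x : R) : R := rho1 * (1 + x) / 2 + rho2 * (1 - x) / 2.
Definition drho_dphi : R := (rho1 - rho2) / 2.

Fixpoint eval (E : term) : fld :=
  match E with
  | EPd f l => pdl l f
  | ECst r => fun _ _ _ _ => r
  | EAdd x y => fun a b c t => eval x a b c t + eval y a b c t
  | EMul x y => fun a b c t => eval x a b c t * eval y a b c t
  | ERho => dens rho1 phi
  | ERhoInv => fun a b c t => / dens rho1 phi a b c t
  | ELnRho => fun a b c t => ln (dens rho1 phi a b c t)
  | EF0 => fun a b c t => F (phi a b c t)
  | EF1 => fun a b c t => Derive F (phi a b c t)
  | EF2 => fun a b c t => Derive (Derive F) (phi a b c t)
  end.

Fixpoint dterm (k : nat) (E : term) : term :=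
  match E with
  | EPd f l => EPd f (insert_index k l)
  | ECst _ => ECst 0
  | EAdd x y => EAdd (dterm k x) (dterm k y)
  | EMul x y => EAdd (EMul (dterm k x) y) (EMul x (dterm k y))
  | ERho => EMul (ECst drho_dphi) (EPd phi (k :: nil))
  | ERhoInv => EMul (EMul (ECst (- drho_dphi)) (EPd phi (k :: nil))) (EMul ERhoInv ERhoInv)
  | ELnRho => EMul (EMul (ECst drho_dphi) (EPd phi (k :: nil))) ERhoInv
  | EF0 => EMul EF1 (EPd phi (k :: nil))
  | EF1 => EMul EF2 (EPd phi (k :: nil))
  | EF2 => ECst 0
  end.

Fixpoint smooth_leaves (E : term) : Prop :=
  match E with
  | EPd f _ => smooth T f
  | EAdd x y | EMul x y => smooth_leaves x /\ smooth_leaves y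
  | _ => True
  end.

(* [F] is only C^2, so [F''] may not be differentiated. *)
Fixpoint no_F2 (E : term) : bool :=
  match E with
  | EAdd x y | EMul x y => no_F2 x && no_F2 y
  | EF2 => false
  | _ => true
  end.

Hypothesis hphi : smooth T phi.
Hypothesis hrho1 : 0 < rho1 < rho2.
Hypothesis hF : C2_on_m11 F.
Hypothesis hrange : forall a b c t, 0 < t < T -> -1 < phi a b c t < 1.

Lemma dens_pos a b c t : 0 < t < T -> 0 < dens rho1 phi a b c t.
Proof. intros Ht. specialize (hrange a b c t Ht). unfold dens, rho2 in *. nra. Qed.

Lemma dens_of_pos q : in_slab T q -> 0 < dens_of (uncurry4 phi q).
Proof. destruct q as [[[a b] c] t]. apply dens_pos. Qed.

Lemma phi_range q : in_slab T q -> -1 < uncurry4 phi q < 1.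
Proof. destruct q as [[[a b] c] t]. apply hrange. Qed.

Lemma pd_pdl k l f a b c t : smooth T f -> 0 < t < T ->
  pd k (pdl l f) a b c t = pdl (insert_index k l) f a b c t.
Proof.
  intros Hf. revert a b c t. induction l as [|m l IH]; intros a b c t Ht; simpl; [reflexivity|].
  destruct (Nat.leb k m); [reflexivity|]. simpl.
  rewrite (pd_comm T) by (try apply smooth_pdl; auto).
  now apply (pd_ext_slab T).
Qed.

Lemma smooth_leaves_dterm E k : smooth_leaves E -> smooth_leaves (dterm k E).
Proof. induction E; simpl; intuition. Qed.

Lemma line_comp_phi (h : R -> R) dh E k q : in_slab T q ->
  (forall p, uncurry4 (eval E) p = h (uncurry4 phi p)) ->
  is_derive h (uncurry4 phi q) dh ->
  uncurry4 (eval (dterm k E)) q = uncurry4 (pd k phi) q * dh ->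
  is_derive (fun s => uncurry4 (eval E) (set_coord k q s)) (coord k q) (uncurry4 (eval (dterm k E)) q).
Proof.
  intros Hq HE Hh ->. apply (is_derive_ext (fun s => h (uncurry4 phi (set_coord k q s)))).
  { intros s. now rewrite HE. }
  apply (is_derive_comp h); [now rewrite set_coord_id | now apply (smooth_is_derive_line T)].
Qed.

Lemma eval_is_derive_line E k q : smooth_leaves E -> no_F2 E = true -> in_slab T q ->
  is_derive (fun s => uncurry4 (eval E) (set_coord k q s)) (coord k q) (uncurry4 (eval (dterm k E)) q).
Proof.
  intros Hw Hn Hq. pose proof (dens_of_pos q Hq) as Hpos. pose proof (phi_range q Hq) as Hr.
  induction E as [f l|r|x IHx y IHy|x IHx y IHy| | | | | |]; simpl in Hw, Hn.
  - replace (uncurry4 (eval (dterm k (EPd f l))) q) with (uncurry4 (pd k (pdl l f)) q)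
      by (destruct q as [[[a b] c] t]; now apply pd_pdl).
    apply (smooth_is_derive_line T); [now apply smooth_pdl | exact Hq].
  - apply (is_derive_ext (fun _ => r)); [by_line|].
    destruct q as [[[? ?] ?] ?]. apply (is_derive_const (K := R_AbsRing) (V := R_NormedModule)).
  - apply andb_prop in Hn as [Hnx Hny]. destruct Hw as [Hwx Hwy].
    exact (is_derive_line_plus _ _ _ _ k q (IHx Hwx Hnx) (IHy Hwy Hny)).
  - apply andb_prop in Hn as [Hnx Hny]. destruct Hw as [Hwx Hwy].
    exact (is_derive_line_mult _ _ _ _ k q (IHx Hwx Hnx) (IHy Hwy Hny)).
  - apply (line_comp_phi dens_of drho_dphi); auto;
      [by_point | unfold dens_of; auto_derive; try easy; unfold drho_dphi; field |].
    destruct q as [[[? ?] ?] ?]. simpl. ring.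
  - apply (line_comp_phi (fun x => / dens_of x) (- drho_dphi / dens_of (uncurry4 phi q) ^ 2)); auto;
      [by_point | unfold dens_of in *; auto_derive; [lra | unfold drho_dphi, rho2 in *; field; lra] |].
    destruct q as [[[? ?] ?] ?]. simpl in *. unfold dens, dens_of in *. field. lra.
  - apply (line_comp_phi (fun x => ln (dens_of x)) (drho_dphi / dens_of (uncurry4 phi q))); auto;
      [by_point | unfold dens_of in *; auto_derive; [lra | unfold drho_dphi, rho2 in *; field; lra] |].
    destruct q as [[[? ?] ?] ?]. simpl in *. unfold dens, dens_of in *. field. lra.
  - apply (line_comp_phi F (Derive F (uncurry4 phi q))); auto;
      [by_point | apply Derive_correct, (hF _ Hr) |].
    destruct q as [[[? ?] ?] ?]. simpl. ring.
  - apply (line_comp_phi (Derive F) (Derive (Derive F) (uncurry4 phi q))); auto;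
      [by_point | apply Derive_correct, (hF _ Hr) |].
    destruct q as [[[? ?] ?] ?]. simpl. ring.
  - discriminate.
Qed.

Lemma continuous_comp_phi (h : R -> R) E q : in_slab T q ->
  (forall p, uncurry4 (eval E) p = h (uncurry4 phi p)) ->
  continuous h (uncurry4 phi q) -> continuous (uncurry4 (eval E)) q.
Proof.
  intros Hq HE Hh. rewrite (functional_extensionality _ _ HE).
  apply (continuous_comp (uncurry4 phi) h); [now apply (smooth_continuous T) | exact Hh].
Qed.

Lemma eval_continuous E q : smooth_leaves E -> in_slab T q -> continuous (uncurry4 (eval E)) q.
Proof.
  intros Hw Hq. pose proof (dens_of_pos q Hq) as Hpos. pose proof (phi_range q Hq) as Hr.
  assert (Hd : forall h, ex_derive h (uncurry4 phi q) -> continuous h (uncurry4 phi q))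
    by (intros h; apply (ex_derive_continuous (K := R_AbsRing) (V := R_NormedModule))).
  induction E as [f l|r|x IHx y IHy|x IHx y IHy| | | | | |]; simpl in Hw.
  - apply (smooth_continuous T); [now apply smooth_pdl | exact Hq].
  - rewrite (functional_extensionality (uncurry4 (eval (ECst r))) (fun _ => r)) by by_point.
    apply continuous_const.
  - destruct Hw as [Hwx Hwy].
    rewrite (functional_extensionality (uncurry4 (eval (EAdd x y)))
               (fun p => uncurry4 (eval x) p + uncurry4 (eval y) p)) by by_point.
    apply (continuous_plus (V := R_NormedModule)); auto.
  - destruct Hw as [Hwx Hwy].
    rewrite (functional_extensionality (uncurry4 (eval (EMul x y)))
               (fun p => uncurry4 (eval x) p * uncurry4 (eval y) p)) by by_point.
    apply (continuous_mult (K := R_AbsRing)); auto.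
  - apply (continuous_comp_phi dens_of); auto; [by_point | apply Hd; unfold dens_of; auto_derive; auto].
  - apply (continuous_comp_phi (fun x => / dens_of x)); auto;
      [by_point | apply Hd; unfold dens_of in *; auto_derive; lra].
  - apply (continuous_comp_phi (fun x => ln (dens_of x))); auto;
      [by_point | apply Hd; unfold dens_of in *; auto_derive; lra].
  - apply (continuous_comp_phi F); auto; [by_point | apply Hd, (hF _ Hr)].
  - apply (continuous_comp_phi (Derive F)); auto; [by_point | apply Hd, (hF _ Hr)].
  - apply (continuous_comp_phi (Derive (Derive F))); auto; [by_point | apply (hF _ Hr)].
Qed.

Lemma pd_eval E k a b c t : smooth_leaves E -> no_F2 E = true -> 0 < t < T ->
  pd k (eval E) a b c t = eval (dterm k E) a b c t.
Proof.
  intros Hw Hn Ht.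
  change (uncurry4 (pd k (eval E)) (a, b, c, t) = uncurry4 (eval (dterm k E)) (a, b, c, t)).
  rewrite pd_set_coord. apply is_derive_unique. now apply eval_is_derive_line.
Qed.

Lemma pd2_eval E j k a b c t :
  smooth_leaves E -> no_F2 E = true -> no_F2 (dterm k E) = true -> 0 < t < T ->
  pd j (pd k (eval E)) a b c t = eval (dterm j (dterm k E)) a b c t.
Proof.
  intros Hw Hn Hn2 Ht. rewrite <- pd_eval by auto using smooth_leaves_dterm.
  apply (pd_ext_slab T); auto. intros. now apply pd_eval.
Qed.

End Expressions.

Lemma Derive_periodic (f : R -> R) x : (forall s, f (s + 1) = f s) -> Derive f (x + 1) = Derive f x.
Proof.
  intros H. unfold Derive. f_equal. apply Lim_ext. intros h.
  replace (x + 1 + h) with (x + h + 1) by ring. now rewrite !H.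
Qed.

Lemma periodic_pd k f : periodic f -> periodic (pd k f).
Proof.
  intros H a b c t.
  destruct_axis k; unfold pd; repeat split;
    first [apply Derive_periodic; intros s; apply H | apply Derive_ext; intros s; apply H].
Qed.

Lemma periodic_pdl l f : periodic f -> periodic (pdl l f).
Proof. induction l; simpl; auto using periodic_pd. Qed.

Lemma periodic_comp (h : R -> R) f : periodic f -> periodic (fun a b c t => h (f a b c t)).
Proof. intros H a b c t. destruct (H a b c t) as [? [? ?]]. repeat split; congruence. Qed.

Lemma periodic_op (op : R -> R -> R) f g : periodic f -> periodic g ->
  periodic (fun a b c t => op (f a b c t) (g a b c t)).
Proof.
  intros Hf Hg a b c t. destruct (Hf a b c t) as [? [? ?]], (Hg a b c t) as [? [? ?]].
  repeat split; congruence.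
Qed.

Fixpoint periodic_leaves (E : term) : Prop :=
  match E with
  | EPd f _ => periodic f
  | EAdd x y | EMul x y => periodic_leaves x /\ periodic_leaves y
  | _ => True
  end.

Lemma periodic_eval rho1 F phi E : periodic phi -> periodic_leaves E -> periodic (eval rho1 F phi E).
Proof.
  intros Hp. induction E; simpl; intros HE.
  - now apply periodic_pdl.
  - now intros a b c t.
  - apply (periodic_op Rplus); tauto.
  - apply (periodic_op Rmult); tauto.
  - exact (periodic_comp (dens_of rho1) phi Hp).
  - exact (periodic_comp (fun x => / dens_of rho1 x) phi Hp).
  - exact (periodic_comp (fun x => ln (dens_of rho1 x)) phi Hp).
  - exact (periodic_comp F phi Hp).
  - exact (periodic_comp (Derive F) phi Hp).
  - exact (periodic_comp (Derive (Derive F)) phi Hp).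
Qed.

(** * Integrals depending on a parameter *)

Definition joint {X A : Type} (f : X -> R -> A) (z : X * R) : A := f (fst z) (snd z).

Section ParamIntegral.
Context {X : UniformSpace}.

Lemma continuous_section (f : X -> R -> R) x c :
  continuous (joint f) (x, c) -> continuous (f x) c.
Proof.
  intros H. apply (continuous_comp (fun s : R => (x, s)) (joint f) c); [|exact H].
  apply continuous_pair; [apply continuous_const | apply continuous_id].
Qed.

Lemma ex_RInt_section (f : X -> R -> R) x :
  (forall c, 0 <= c <= 1 -> continuous (joint f) (x, c)) -> ex_RInt (f x) 0 1.
Proof.
  intros H. apply (ex_RInt_continuous (V := R_CompleteNormedModule)). intros c Hc.
  rewrite Rmin_left, Rmax_right in Hc by lra. now apply continuous_section, H.
Qed.

(* A Lebesgue number for the cover of [0,1] by the continuity neighbourhoods. *)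
Lemma uniformly_near_on_01 (f : X -> R -> R) x0 :
  (forall c, 0 <= c <= 1 -> continuous (joint f) (x0, c)) ->
  forall eps : posreal, locally x0 (fun x => forall c, 0 <= c <= 1 -> Rabs (f x c - f x0 c) <= eps).
Proof.
  intros H0 eps. assert (He : 0 < eps / 2) by (destruct eps; simpl; lra).
  set (e2 := mkposreal _ He).
  assert (Hd : forall c, exists d : posreal, 0 <= c <= 1 ->
     forall z, ball (x0, c) d z -> Rabs (joint f z - f x0 c) < e2).
  { intros c. destruct (Rle_dec 0 c) as [h1|h1]; [destruct (Rle_dec c 1) as [h2|h2]|];
      try (exists (mkposreal 1 Rlt_0_1); intros Hc; lra).
    destruct (proj1 (filterlim_locally _ _) (H0 c (conj h1 h2)) e2) as [d Hd].
    exists d. intros _ z Hz. apply Hd, Hz. }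
  destruct (functional_choice _ Hd) as [delta Hdelta].
  destruct (compactness_value_1d 0 1 delta) as [d Hcomp].
  exists d. intros x Hx c Hc. apply Rnot_lt_le. intros Hlt.
  apply (Hcomp c Hc). intros [c' [Hc' [Hcc' Hdc']]].
  assert (A1 : Rabs (f x c - f x0 c') < e2).
  { apply (Hdelta c' Hc' (x, c)). split; [eapply ball_le; eauto | apply ball_R, Hcc']. }
  assert (A2 : Rabs (f x0 c - f x0 c') < e2).
  { apply (Hdelta c' Hc' (x0, c)). split; [apply ball_center | apply ball_R, Hcc']. }
  assert (Rabs (f x c - f x0 c) <= Rabs (f x c - f x0 c') + Rabs (f x0 c - f x0 c')).
  { replace (f x c - f x0 c) with ((f x c - f x0 c') + - (f x0 c - f x0 c')) by ring.
    rewrite <- (Rabs_Ropp (f x0 c - f x0 c')). apply Rabs_triang. }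
  simpl in *. lra.
Qed.

Lemma continuous_RInt_param (f : X -> R -> R) x0 :
  locally x0 (fun x => forall c, 0 <= c <= 1 -> continuous (joint f) (x, c)) ->
  continuous (fun x => RInt (f x) 0 1) x0.
Proof.
  intros HU. pose proof (locally_singleton _ _ HU) as H0.
  apply (filterlim_locally (F := locally x0)). intros eps.
  assert (He : 0 < eps / 2) by (destruct eps; simpl; lra).
  generalize (filter_and _ _ HU (uniformly_near_on_01 f x0 H0 (mkposreal _ He))).
  apply filter_imp. intros x [Hx Hclose]. simpl in Hclose.
  pose proof (ex_RInt_section f x Hx). pose proof (ex_RInt_section f x0 H0).
  apply ball_R. rewrite <- (RInt_minus (V := R_CompleteNormedModule)) by assumption.
  eapply Rle_lt_trans.
  - apply (abs_RInt_le_const (fun c => f x c - f x0 c) 0 1 (eps / 2)); [lra | | exact Hclose].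
    now apply (ex_RInt_minus (V := R_NormedModule)).
  - destruct eps; simpl; lra.
Qed.

End ParamIntegral.

Definition C1_in_time {Y : UniformSpace} (U : Y -> R -> Prop) (G G' : Y -> R -> R) : Prop :=
  forall y t, U y t ->
    is_derive (G y) t (G' y t) /\ continuous (joint G) (y, t) /\ continuous (joint G') (y, t).

Lemma locally_slice {Y : UniformSpace} (y : Y) (t : R) (P : Y * R -> Prop) :
  locally (y, t) P -> locally t (fun t' => P (y, t')).
Proof. intros [e He]. exists e. intros t' Ht'. apply He. split; [apply ball_center | exact Ht']. Qed.

Lemma locally_fst (t s : R) (P : R -> Prop) :
  locally t P -> locally (t, s) (fun z : R * R => P (fst z)).
Proof. intros [e He]. exists e. intros [u v] [Hu _]. now apply He. Qed.

Section IntegrateParameter.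
Context {Y : UniformSpace}.
Variables (U : Y -> R -> Prop) (G G' : Y * R -> R -> R).
Hypothesis U_open : forall y t, U y t -> locally (y, t) (joint U).
Hypothesis HG : C1_in_time (fun p t => U (fst p) t) G G'.

Let swap (z : Y * R * R) : Y * R * R := ((fst (fst z), snd z), snd (fst z)).

Lemma continuous_swap (H : Y * R -> R -> R) y t s :
  continuous (joint H) ((y, s), t) -> continuous (joint (fun yt s => H (fst yt, s) (snd yt))) ((y, t), s).
Proof.
  intros Hc. apply (continuous_comp swap (joint H)); [unfold swap; continuity_proj | exact Hc].
Qed.

Lemma continuous_RInt_in_time (H : Y * R -> R -> R) y t :
  (forall y t s, U y t -> continuous (joint H) ((y, s), t)) -> U y t ->
  continuous (joint (fun y t => RInt (fun s => H (y, s) t) 0 1)) (y, t).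
Proof.
  intros Hc Hyt.
  apply (continuous_RInt_param (fun yt s => H (fst yt, s) (snd yt)) (y, t)).
  apply (filter_imp (joint U)); [|now apply U_open].
  intros [y' t'] Hyt' c _. apply continuous_swap, Hc, Hyt'.
Qed.

Lemma is_derive_RInt_in_time y t : U y t ->
  is_derive (fun t => RInt (fun s => G (y, s) t) 0 1) t (RInt (fun s => G' (y, s) t) 0 1).
Proof.
  intros Hyt. pose proof (locally_slice y t _ (U_open y t Hyt)) as Hloc. simpl in Hloc.
  replace (RInt (fun s => G' (y, s) t) 0 1) with (RInt (fun s => Derive (fun u => G (y, s) u) t) 0 1)
    by (apply RInt_ext; intros s _; now apply is_derive_unique, (HG (y, s) t)).
  apply (is_derive_RInt_param (fun u s => G (y, s) u)).
  - apply (filter_imp (fun t' => U y t')); [|exact Hloc].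
    intros t' Ht' s _. eexists. exact (proj1 (HG (y, s) t' Ht')).
  - intros s _. apply continuity_2d_pt_filterlim.
    apply (filterlim_ext_loc (fun z : R * R => G' (y, snd z) (fst z))).
    + apply (filter_imp (fun z : R * R => U y (fst z))); [|now apply locally_fst].
      intros z Hz. symmetry. now apply is_derive_unique, (HG (y, snd z) (fst z)).
    + simpl. replace (Derive (fun u => G (y, s) u) t) with (G' (y, s) t)
        by (symmetry; now apply is_derive_unique, (HG (y, s) t)).
      apply (continuous_comp (fun z : R * R => ((y, snd z), fst z)) (joint G'));
        [continuity_proj | exact (proj2 (proj2 (HG (y, s) t Hyt)))].
  - apply (filter_imp (fun t' => U y t')); [|exact Hloc].
    intros t' Ht'. apply (ex_RInt_continuous (V := R_CompleteNormedModule)). intros s _.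
    apply (continuous_comp (fun s => ((y, s), t')) (joint G));
      [continuity_proj | exact (proj1 (proj2 (HG (y, s) t' Ht')))].
Qed.

Lemma C1_in_time_RInt :
  C1_in_time U (fun y t => RInt (fun s => G (y, s) t) 0 1) (fun y t => RInt (fun s => G' (y, s) t) 0 1).
Proof.
  intros y t Hyt. split; [now apply is_derive_RInt_in_time|].
  split; apply continuous_RInt_in_time; auto; intros y' t' s Hyt'; apply (HG (y', s) t' Hyt').
Qed.

End IntegrateParameter.

Lemma RInt_derive_periodic {Y : UniformSpace} (G G' : Y -> R -> R) :
  C1_in_time (fun _ _ => True) G G' -> (forall y s, G y (s + 1) = G y s) ->
  forall y, RInt (G' y) 0 1 = 0.
Proof.
  intros HG Hper y.
  rewrite (RInt_ext _ (Derive (G y))) by (intros s _; symmetry; now apply is_derive_unique, HG).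
  rewrite RInt_Derive.
  - rewrite <- (Rplus_0_l 1), Hper. apply Rminus_diag.
  - intros s _. eexists. now apply HG.
  - intros s _. rewrite (functional_extensionality (Derive (G y)) (G' y))
      by (intros s'; now apply is_derive_unique, HG).
    apply (continuous_comp (fun s => (y, s)) (joint G')); [continuity_proj | now apply HG].
Qed.

Definition C1_along (k : nat) (g : fld) (q : point) : Prop :=
  continuous (uncurry4 g) q /\ continuous (uncurry4 (pd k g)) q /\
  ex_derive (fun s => uncurry4 g (set_coord k q s)) (coord k q).

Lemma C1_in_time_along {Y : UniformSpace} (U : Y -> R -> Prop) k g (place : Y -> R -> point) :
  (forall z, continuous (joint place) z) ->
  (forall y s r, set_coord k (place y s) r = place y r) ->
  (forall y s, coord k (place y s) = s) ->
  (forall y s, U y s -> C1_along k g (place y s)) ->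
  C1_in_time U (fun y s => uncurry4 g (place y s)) (fun y s => uncurry4 (pd k g) (place y s)).
Proof.
  intros Hpl Hset Hcoord Hg y s Hys. destruct (Hg y s Hys) as [Hc [Hc' Hd]]. split; [|split].
  - rewrite pd_set_coord, Hcoord in *.
    apply (is_derive_ext (fun r => uncurry4 g (set_coord k (place y s) r))).
    + intros r. now rewrite Hset.
    + now apply Derive_correct.
  - apply (continuous_comp (joint place) (uncurry4 g)); [apply Hpl | exact Hc].
  - apply (continuous_comp (joint place) (uncurry4 (pd k g))); [apply Hpl | exact Hc'].
Qed.

Definition continuous3 (h : R -> R -> R -> R) : Prop :=
  forall z : R * R * R, continuous (fun z : R * R * R => h (fst (fst z)) (snd (fst z)) (snd z)) z.

Lemma continuous3_at_time (g : fld) t : (forall a b c, continuous (uncurry4 g) (a, b, c, t)) ->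
  continuous3 (fun a b c => g a b c t).
Proof.
  intros H [[a b] c].
  apply (continuous_comp (fun z : R * R * R => (fst (fst z), snd (fst z), snd z, t)) (uncurry4 g));
    [continuity_proj | apply H].
Qed.

Lemma is_derive_Int3_time (T : R) (g : fld) :
  (forall q, 0 < time_of q < T -> C1_along 3 g q) ->
  forall t, 0 < t < T ->
  is_derive (fun t => Int3 (fun a b c => g a b c t)) t (Int3 (fun a b c => dt g a b c t)).
Proof.
  intros Hg t Ht.
  pose proof (C1_in_time_along (fun (_ : R * R * R * R) t => 0 < t < T) 3 g
    (fun p t => (snd (fst (fst p)), snd (fst p), snd p, t))
    ltac:(intros; unfold joint; continuity_proj) ltac:(reflexivity) ltac:(reflexivity)
    (fun p t' Ht' => Hg (snd (fst (fst p)), snd (fst p), snd p, t') Ht')) as H0.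
  assert (Hopen : forall (Z : UniformSpace) (z : Z) t, 0 < t < T ->
            locally (z, t) (joint (fun (_ : Z) t => 0 < t < T)))
    by (intros Z z t' Ht'; now apply locally_time_interval).
  pose proof (C1_in_time_RInt _ _ _ (Hopen _) H0) as H1.
  pose proof (C1_in_time_RInt _ _ _ (Hopen _) H1) as H2.
  pose proof (C1_in_time_RInt _ _ _ (Hopen _) H2) as H3.
  exact (proj1 (H3 0 t Ht)).
Qed.

Lemma RInt_zero_01 : RInt (fun _ : R => 0) 0 1 = 0.
Proof. rewrite RInt_const. unfold scal; simpl. unfold mult; simpl. ring. Qed.

Section PeriodicDivergence.
Variables (G : fld) (t : R).
Hypothesis HG : forall k, (k < 3)%nat -> forall a b c, C1_along k G (a, b, c, t).
Hypothesis Hper : periodic G.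

Let everywhere {Y : UniformSpace} (y : Y) (s : R) : locally (y, s) (joint (fun (_ : Y) (_ : R) => True)) :=
  filter_true.

Lemma Int3_pd0_periodic : Int3 (fun a b c => pd 0 G a b c t) = 0.
Proof.
  pose proof (C1_in_time_along (fun (_ : R * R * R) _ => True) 0 G (fun p a => (a, snd (fst p), snd p, t))
    ltac:(intros; unfold joint; continuity_proj) ltac:(reflexivity) ltac:(reflexivity)
    (fun p a _ => HG 0 ltac:(lia) _ _ _)) as H0.
  pose proof (C1_in_time_RInt _ _ _ (fun _ _ _ => everywhere _ _) H0) as H1.
  pose proof (C1_in_time_RInt _ _ _ (fun _ _ _ => everywhere _ _) H1) as H2.
  refine (RInt_derive_periodic _ _ H2 _ 0).
  intros y a. apply RInt_ext. intros b _. apply RInt_ext. intros c _. apply Hper.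
Qed.

Lemma Int3_pd1_periodic : Int3 (fun a b c => pd 1 G a b c t) = 0.
Proof.
  pose proof (C1_in_time_along (fun (_ : R * R) _ => True) 1 G (fun p b => (fst p, b, snd p, t))
    ltac:(intros; unfold joint; continuity_proj) ltac:(reflexivity) ltac:(reflexivity)
    (fun p b _ => HG 1 ltac:(lia) _ _ _)) as H0.
  pose proof (C1_in_time_RInt _ _ _ (fun _ _ _ => everywhere _ _) H0) as H1.
  unfold Int3. transitivity (RInt (fun _ : R => 0) 0 1); [|apply RInt_zero_01]. apply RInt_ext. intros a _.
  refine (RInt_derive_periodic _ _ H1 _ a).
  intros a' b. apply RInt_ext. intros c _. apply Hper.
Qed.

Lemma Int3_pd2_periodic : Int3 (fun a b c => pd 2 G a b c t) = 0.
Proof.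
  pose proof (C1_in_time_along (fun (_ : R * R) _ => True) 2 G (fun p c => (fst p, snd p, c, t))
    ltac:(intros; unfold joint; continuity_proj) ltac:(reflexivity) ltac:(reflexivity)
    (fun p c _ => HG 2 ltac:(lia) _ _ _)) as H0.
  unfold Int3. transitivity (RInt (fun _ : R => 0) 0 1); [|apply RInt_zero_01]. apply RInt_ext. intros a _.
  transitivity (RInt (fun _ : R => 0) 0 1); [|apply RInt_zero_01]. apply RInt_ext. intros b _.
  refine (RInt_derive_periodic _ _ H0 _ (a, b)).
  intros p c. apply Hper.
Qed.

End PeriodicDivergence.

Lemma Int3_ex (h : R -> R -> R -> R) : continuous3 h ->
  (forall a b, ex_RInt (h a b) 0 1) /\
  (forall a, ex_RInt (fun b => RInt (h a b) 0 1) 0 1) /\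
  ex_RInt (fun a => RInt (fun b => RInt (h a b) 0 1) 0 1) 0 1.
Proof.
  intros H.
  assert (C2 : forall y : R * R, continuous (fun y : R * R => RInt (h (fst y) (snd y)) 0 1) y)
    by (intros y; apply continuous_RInt_param, filter_forall; intros x c _; apply H).
  assert (C1 : forall a, continuous (fun a => RInt (fun b => RInt (h a b) 0 1) 0 1) a)
    by (intros a; apply continuous_RInt_param, filter_forall; intros x c _; apply C2).
  split; [|split].
  - intros a b. apply (ex_RInt_section (fun y : R * R => h (fst y) (snd y)) (a, b)). intros c _. apply H.
  - intros a. apply (ex_RInt_section (fun a b => RInt (h a b) 0 1) a). intros c _. apply C2.
  - apply (ex_RInt_continuous (V := R_CompleteNormedModule)). intros a _. apply C1.
Qed.

Lemma Int3_ext (h1 h2 : R -> R -> R -> R) :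
  (forall a b c, h1 a b c = h2 a b c) -> Int3 h1 = Int3 h2.
Proof.
  intros H. unfold Int3. apply RInt_ext; intros a _. apply RInt_ext; intros b _.
  apply RInt_ext; intros c _. apply H.
Qed.

Lemma Int3_plus (h1 h2 : R -> R -> R -> R) : continuous3 h1 -> continuous3 h2 ->
  Int3 (fun a b c => h1 a b c + h2 a b c) = Int3 h1 + Int3 h2.
Proof.
  intros H1 H2. destruct (Int3_ex h1 H1) as [A1 [B1 C1]], (Int3_ex h2 H2) as [A2 [B2 C2]].
  unfold Int3. rewrite <- (RInt_plus (V := R_CompleteNormedModule)) by auto.
  apply RInt_ext; intros a _. rewrite <- (RInt_plus (V := R_CompleteNormedModule)) by auto.
  apply RInt_ext; intros b _. now rewrite <- (RInt_plus (V := R_CompleteNormedModule)) by auto.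
Qed.

Lemma Int3_scal (k : R) (h : R -> R -> R -> R) : continuous3 h ->
  Int3 (fun a b c => k * h a b c) = k * Int3 h.
Proof.
  intros H. destruct (Int3_ex h H) as [A [B C]].
  unfold Int3. rewrite <- (RInt_scal (V := R_CompleteNormedModule)) by auto.
  apply RInt_ext; intros a _. rewrite <- (RInt_scal (V := R_CompleteNormedModule)) by auto.
  apply RInt_ext; intros b _. now rewrite <- (RInt_scal (V := R_CompleteNormedModule)) by auto.
Qed.

Lemma continuous3_plus h1 h2 :
  continuous3 h1 -> continuous3 h2 -> continuous3 (fun a b c => h1 a b c + h2 a b c).
Proof. intros H1 H2 z. apply (continuous_plus (V := R_NormedModule)); auto. Qed.

Lemma continuous3_scal k h : continuous3 h -> continuous3 (fun a b c => k * h a b c).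
Proof. intros H z. apply (continuous_mult (K := R_AbsRing)); [apply continuous_const | auto]. Qed.

Lemma alpha_pos rho1 : 0 < rho1 < rho2 -> 0 < alpha rho1.
Proof. intros H. unfold alpha, rho2 in *. apply Rdiv_lt_0_compat; lra. Qed.

Lemma phi_of_dens rho1 x : 0 < rho1 < rho2 ->
  - kappa rho1 * dens_of rho1 x + kappa rho1 - 1 = x.
Proof. intros H. unfold kappa, alpha, dens_of, rho2 in *. field. split; lra. Qed.

Lemma Derive2_Ftilde rho1 F x : C2_on_m11 F ->
  -1 < - kappa rho1 * x + kappa rho1 - 1 < 1 ->
  Derive_n (Ftilde rho1 F) 2 x = kappa rho1 ^ 2 * Derive (Derive F) (- kappa rho1 * x + kappa rho1 - 1).
Proof.
  intros HF Hx.
  change (Derive (Derive (Ftilde rho1 F)) x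
          = kappa rho1 ^ 2 * Derive (Derive F) (- kappa rho1 * x + kappa rho1 - 1)).
  set (g := fun r => - kappa rho1 * r + kappa rho1 - 1).
  assert (Hg : forall r, is_derive g r (- kappa rho1)) by (intros r; unfold g; auto_derive; auto; ring).
  assert (Hloc : locally x (fun r => -1 < g r < 1)).
  { apply (ex_derive_continuous (K := R_AbsRing) (V := R_NormedModule) g x (ex_intro _ _ (Hg x))
           (fun y => -1 < y < 1)).
    apply (open_and (fun y => -1 < y) (fun y => y < 1)); [apply open_gt | apply open_lt | exact Hx]. }
  assert (D1 : forall r, -1 < g r < 1 -> is_derive (Ftilde rho1 F) r (- kappa rho1 * Derive F (g r))).
  { intros r Hr. apply (is_derive_comp F g r (Derive F (g r))); [apply Derive_correct, HF, Hr | apply Hg]. }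
  rewrite (Derive_ext_loc _ (fun r => - kappa rho1 * Derive F (g r))).
  2:{ apply (filter_imp _ _ (fun r Hr => is_derive_unique _ _ _ (D1 r Hr)) Hloc). }
  apply is_derive_unique.
  fold (g x).
  replace (kappa rho1 ^ 2 * Derive (Derive F) (g x))
    with (- kappa rho1 * (- kappa rho1 * Derive (Derive F) (g x))) by ring.
  apply is_derive_scal, (is_derive_comp (Derive F) g x); [apply Derive_correct, HF, Hx | apply Hg].
Qed.

(** * The energy identity *)

Section EnergyIdentity.
Variables (rho1 T : R) (F : R -> R) (u : nat -> fld) (p phi mu : fld).
Hypotheses (hrho1 : 0 < rho1 < rho2) (hF : C2_on_m11 F)
  (hu_sm : forall i, (i < 3)%nat -> smooth_on (slab T) (u i))
  (hp_sm : smooth_on (slab T) p) (hphi_sm : smooth_on (slab T) phi)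
  (hmu_sm : smooth_on (slab T) mu)
  (hphi_range : forall a b c t, 0 < t < T -> -1 < phi a b c t < 1)
  (hu_per : forall i, (i < 3)%nat -> periodic (u i))
  (hp_per : periodic p) (hphi_per : periodic phi) (hmu_per : periodic mu)
  (hmom : forall i, (i < 3)%nat -> forall a b c t, 0 < t < T ->
     dt (fun a' b' c' t' => dens rho1 phi a' b' c' t' * u i a' b' c' t') a b c t
     + sum3 (fun j => pd j (fun a' b' c' t' =>
           dens rho1 phi a' b' c' t' * u i a' b' c' t' * u j a' b' c' t') a b c t)
     + pd i p a b c t
     = sum3 (fun j => pd j (fun a' b' c' t' =>
           dens rho1 phi a' b' c' t' *
             ((pd j (u i) a' b' c' t' + pd i (u j) a' b' c' t') / 2)) a b c t)
       - phi a b c t * pd i mu a b c t)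
  (hmass : forall a b c t, 0 < t < T ->
     dt (dens rho1 phi) a b c t
     + sum3 (fun j => pd j (fun a' b' c' t' =>
           dens rho1 phi a' b' c' t' * u j a' b' c' t') a b c t) = 0)
  (hCH : forall a b c t, 0 < t < T ->
     dt phi a b c t
     + sum3 (fun j => pd j (fun a' b' c' t' => phi a' b' c' t' * u j a' b' c' t') a b c t)
     = lap (fun a' b' c' t' => mu a' b' c' t' + alpha rho1 * p a' b' c' t') a b c t)
  (hmu : forall a b c t, 0 < t < T ->
     mu a b c t = - lap phi a b c t + Derive F (phi a b c t)).

Local Notation ev := (eval rho1 F phi).
Local Notation dE := (dterm rho1 phi).
Local Notation U i := (EPd (u i) nil).
Local Notation DU k i := (EPd (u i%nat) (k%nat :: nil)).
Local Notation PHI := (EPd phi nil).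
Local Notation DPHI k := (EPd phi (k :: nil)).
Local Notation P := (EPd p nil).
Local Notation MU := (EPd mu nil).
Local Notation al := (alpha rho1).
Local Notation ka := (kappa rho1).
Local Notation sum3E g := (EAdd (EAdd (g 0%nat) (g 1%nat)) (g 2%nat)).
Local Notation DRHO k := (dE k ERho).
Local Notation DLNRHO k := (dE k ELnRho).
Local Notation MUP := (EAdd MU (EMul (ECst al) P)).
Local Notation DMUP k := (dE k MUP).
Local Notation KIN := (EMul (ECst (/2)) (EMul ERho (sum3E (fun i => EMul (U i) (U i))))).
Local Notation SYM i j := (EMul (ECst (/2)) (EAdd (DU j i) (DU i j))).
Local Notation DIVU := (sum3E (fun k => DU k k)).
Local Notation U_GRAD_RHO := (sum3E (fun k => EMul (U k) (DRHO k))).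
Local Notation GRAD_RHO_SQ := (sum3E (fun k => EMul (DRHO k) (DRHO k))).

Definition energy_density : fld := fun a b c t =>
  let rho := dens rho1 phi in
    rho a b c t / 2 *
      sum3 (fun j => (u j a b c t + pd j (fun a' b' c' t' => ln (rho a' b' c' t')) a b c t) ^ 2)
    + 1 / 2 * sum3 (fun j => (pd j phi a b c t) ^ 2)
    + F (phi a b c t)
    - 1 / (alpha rho1) ^ 2 * ln (rho a b c t).

Definition energy_term : term :=
  EAdd (EAdd (EAdd
   (EMul (EMul ERho (ECst (/2))) (sum3E (fun j => EMul (EAdd (U j) (DLNRHO j)) (EAdd (U j) (DLNRHO j)))))
   (EMul (ECst (1/2)) (sum3E (fun j => EMul (DPHI j) (DPHI j)))))
   EF0)
   (EMul (ECst (- (1 / al ^ 2))) ELnRho).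

(* Collects the terms that the paper's computation integrates by parts. *)
Definition flux (j : nat) : term := term_sum
  [ EMul (ECst (-1)) (EMul KIN (U j));
    sum3E (fun i => EMul ERho (EMul (SYM i j) (U i)));
    sum3E (fun i => EMul (DLNRHO i) (EMul ERho (SYM i j)));
    EMul (U j) (dE 3 ERho);
    EMul (DLNRHO j) (dE 3 ERho);
    EMul (DRHO j) (EMul U_GRAD_RHO ERhoInv);
    EMul (ECst (-1/2)) (EMul (U j) (EMul GRAD_RHO_SQ ERhoInv));
    EMul DIVU (DRHO j);
    EMul (ECst (-1)) (sum3E (fun k => EMul (DU k j) (DRHO k)));
    EMul ERho (EMul (U j) DIVU);
    EMul (ECst (-1)) (sum3E (fun k => EMul ERho (EMul (U k) (DU k j))));
    EMul (DPHI j) (EPd phi (3%nat :: nil));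
    EMul MU (DMUP j);
    EMul (ECst (-1)) (EMul MU (EMul PHI (U j)));
    EMul (ECst (-1)) (EMul P (U j));
    EMul (ECst al) (EMul P (DMUP j));
    EMul (ECst ka) (EMul MU (DRHO j));
    EMul (ECst (- ka)) (EMul EF1 (DRHO j));
    EMul (ECst (1 / al ^ 2)) (EMul ELnRho (U j));
    EMul (ECst (- (1 / al ^ 2) * al)) (EMul ELnRho (DMUP j));
    EMul (ECst (1 / al ^ 2)) (U j) ].

Definition grad_mup_sq : fld := fun a b c t =>
  sum3 (fun j => (pd j (fun a b c t => mu a b c t + alpha rho1 * p a b c t) a b c t) ^ 2).
Definition Ftilde_grad_rho_sq : fld := fun a b c t =>
  Derive_n (Ftilde rho1 F) 2 (dens rho1 phi a b c t) * sum3 (fun j => (pd j (dens rho1 phi) a b c t) ^ 2).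
Definition lap_rho_sq : fld := fun a b c t => (lap (dens rho1 phi) a b c t) ^ 2.
Definition curl_u_sq : fld := fun a b c t =>
  dens rho1 phi a b c t * sum3 (fun i => sum3 (fun j => (pd j (u i) a b c t - pd i (u j) a b c t) ^ 2)).

Definition grad_mup_sq_term := sum3E (fun j => EMul (DMUP j) (DMUP j)).
Definition Ftilde_grad_rho_sq_term := EMul (EMul (ECst (ka ^ 2)) EF2) GRAD_RHO_SQ.
Definition lap_rho_sq_term := EMul (sum3E (fun j => dE j (DRHO j))) (sum3E (fun j => dE j (DRHO j))).
Definition curl_u_sq_term := EMul ERho (sum3E (fun i => sum3E (fun j =>
  EMul (EAdd (DU j i) (EMul (ECst (-1)) (DU i j))) (EAdd (DU j i) (EMul (ECst (-1)) (DU i j)))))).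

Lemma dissipation_densities t : dissipation rho1 F u p phi mu t =
  Int3 (fun a b c => grad_mup_sq a b c t) + Int3 (fun a b c => Ftilde_grad_rho_sq a b c t)
  + kappa rho1 ^ 2 * Int3 (fun a b c => lap_rho_sq a b c t) + 1 / 4 * Int3 (fun a b c => curl_u_sq a b c t).
Proof. reflexivity. Qed.

Lemma smooth_u i : (i < 3)%nat -> smooth T (u i).
Proof. exact (hu_sm i). Qed.

Ltac smooth_leaves_tac :=
  cbn [smooth_leaves dterm flux term_sum energy_term grad_mup_sq_term Ftilde_grad_rho_sq_term
       lap_rho_sq_term curl_u_sq_term];
  repeat match goal with |- _ /\ _ => split | |- True => exact I end;
  first [exact hp_sm | exact hphi_sm | exact hmu_sm | apply smooth_u; lia].

Ltac eval_tac := solve [assumption | reflexivity | smooth_leaves_tac].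

Lemma pd_ev E k a b c t : smooth_leaves T E -> no_F2 E = true -> 0 < t < T ->
  pd k (ev E) a b c t = ev (dE k E) a b c t.
Proof. now apply pd_eval. Qed.

Lemma pd2_ev E j k a b c t :
  smooth_leaves T E -> no_F2 E = true -> no_F2 (dE k E) = true -> 0 < t < T ->
  pd j (pd k (ev E)) a b c t = ev (dE j (dE k E)) a b c t.
Proof. now apply pd2_eval. Qed.

Lemma dens_ne0 a b c t : 0 < t < T -> dens rho1 phi a b c t <> 0.
Proof. intros Ht. apply Rgt_not_eq, (dens_pos T); auto. Qed.

Lemma alpha_ne0 : alpha rho1 <> 0.
Proof. apply Rgt_not_eq, alpha_pos, hrho1. Qed.

Lemma energy_density_eval a b c t : 0 < t < T -> energy_density a b c t = ev energy_term a b c t.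
Proof.
  intros Ht. unfold energy_density, sum3.
  rewrite !(pd_ev ELnRho) by eval_tac.
  cbn [eval dterm energy_term pdl]. pose proof (dens_ne0 a b c t Ht). pose proof alpha_ne0.
  field; auto using pow_nonzero.
Qed.

Lemma dt_energy_density a b c t : 0 < t < T -> dt energy_density a b c t = ev (dE 3 energy_term) a b c t.
Proof.
  intros Ht. rewrite (pd_ext_slab T 3 energy_density (ev energy_term)) by (auto; apply energy_density_eval).
  apply pd_ev; [smooth_leaves_tac | reflexivity | exact Ht].
Qed.

Lemma momentum_eq_eval i a b c t : (i < 3)%nat -> 0 < t < T ->
  ev (dE 3 (EMul ERho (U i))) a b c t
  + sum3 (fun j => ev (dE j (EMul (EMul ERho (U i)) (U j))) a b c t) + ev (dE i P) a b c t
  = sum3 (fun j => ev (dE j (EMul ERho (EMul (EAdd (DU j i) (DU i j)) (ECst (/2))))) a b c t)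
    - ev PHI a b c t * ev (dE i MU) a b c t.
Proof.
  intros Hi Ht. unfold sum3. rewrite <- !pd_ev by eval_tac. exact (hmom i Hi a b c t Ht).
Qed.

Lemma mass_eq_eval a b c t : 0 < t < T ->
  ev (dE 3 ERho) a b c t + sum3 (fun j => ev (dE j (EMul ERho (U j))) a b c t) = 0.
Proof. intros Ht. unfold sum3. rewrite <- !pd_ev by eval_tac. exact (hmass a b c t Ht). Qed.

Lemma cahn_hilliard_eq_eval a b c t : 0 < t < T ->
  ev (dE 3 PHI) a b c t + sum3 (fun j => ev (dE j (EMul PHI (U j))) a b c t)
  = sum3 (fun j => ev (dE j (dE j MUP)) a b c t).
Proof.
  intros Ht. unfold sum3. rewrite <- !pd2_ev by eval_tac. rewrite <- !pd_ev by eval_tac.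
  exact (hCH a b c t Ht).
Qed.

Lemma chemical_potential_eq_eval a b c t : 0 < t < T ->
  ev MU a b c t = - sum3 (fun j => ev (dE j (dE j PHI)) a b c t) + ev EF1 a b c t.
Proof. intros Ht. unfold sum3. rewrite <- !pd2_ev by eval_tac. exact (hmu a b c t Ht). Qed.

Lemma phi_of_dens_at a b c t : - kappa rho1 * dens rho1 phi a b c t + kappa rho1 - 1 = phi a b c t.
Proof. exact (phi_of_dens rho1 (phi a b c t) hrho1). Qed.

Lemma Derive2_Ftilde_dens a b c t : 0 < t < T ->
  Derive_n (Ftilde rho1 F) 2 (dens rho1 phi a b c t) = kappa rho1 ^ 2 * Derive (Derive F) (phi a b c t).
Proof.
  intros Ht. rewrite Derive2_Ftilde, phi_of_dens_at; auto.
  rewrite phi_of_dens_at. now apply hphi_range.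
Qed.

Lemma Ftilde_grad_rho_sq_eval a b c t : 0 < t < T ->
  Ftilde_grad_rho_sq a b c t = ev Ftilde_grad_rho_sq_term a b c t.
Proof.
  intros Ht. unfold Ftilde_grad_rho_sq, sum3. rewrite !(pd_ev ERho) by eval_tac.
  rewrite Derive2_Ftilde_dens by exact Ht.
  cbn [eval dterm Ftilde_grad_rho_sq_term pdl insert_index Nat.leb]. ring.
Qed.

Lemma grad_mup_sq_eval a b c t : 0 < t < T -> grad_mup_sq a b c t = ev grad_mup_sq_term a b c t.
Proof.
  intros Ht. unfold grad_mup_sq, sum3. rewrite !(pd_ev MUP) by eval_tac.
  cbn [eval dterm grad_mup_sq_term pdl insert_index Nat.leb]. ring.
Qed.

Lemma lap_rho_sq_eval a b c t : 0 < t < T -> lap_rho_sq a b c t = ev lap_rho_sq_term a b c t.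
Proof.
  intros Ht. unfold lap_rho_sq, lap, sum3. rewrite !(pd2_ev ERho) by eval_tac.
  cbn [eval dterm lap_rho_sq_term pdl insert_index Nat.leb]. ring.
Qed.

Lemma curl_u_sq_eval a b c t : curl_u_sq a b c t = ev curl_u_sq_term a b c t.
Proof. unfold curl_u_sq, sum3. cbn [eval dterm curl_u_sq_term pdl insert_index Nat.leb]. ring. Qed.

Lemma energy_balance a b c t : 0 < t < T ->
  dt energy_density a b c t =
    - (grad_mup_sq a b c t + Ftilde_grad_rho_sq a b c t + kappa rho1 ^ 2 * lap_rho_sq a b c t
       + 1 / 4 * curl_u_sq a b c t)
    + (pd 0 (ev (flux 0)) a b c t + pd 1 (ev (flux 1)) a b c t + pd 2 (ev (flux 2)) a b c t).
Proof.
  intros Ht.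
  rewrite dt_energy_density, grad_mup_sq_eval, Ftilde_grad_rho_sq_eval, lap_rho_sq_eval, curl_u_sq_eval
    by exact Ht.
  rewrite (pd_ev (flux 0)), (pd_ev (flux 1)), (pd_ev (flux 2)) by eval_tac.
  pose proof (momentum_eq_eval 0 a b c t ltac:(lia) Ht) as Hm0.
  pose proof (momentum_eq_eval 1 a b c t ltac:(lia) Ht) as Hm1.
  pose proof (momentum_eq_eval 2 a b c t ltac:(lia) Ht) as Hm2.
  pose proof (mass_eq_eval a b c t Ht) as Hms.
  pose proof (cahn_hilliard_eq_eval a b c t Ht) as Hch.
  pose proof (chemical_potential_eq_eval a b c t Ht) as Hmu.
  unfold sum3 in Hm0, Hm1, Hm2, Hms, Hch, Hmu.
  cbn [eval dterm insert_index pdl Nat.leb flux term_sum energy_term grad_mup_sq_term Ftilde_grad_rho_sq_term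
       lap_rho_sq_term curl_u_sq_term] in *.
  pose proof (dens_ne0 a b c t Ht) as Hd. pose proof alpha_ne0 as Hal.
  rewrite Hmu. clear Hmu.
  (* Solve the momentum equations for [dt u_i], the Cahn-Hilliard equation for [dt phi] and
     the mass equation for [pd 0 (u 0)]; what remains is a rational identity. *)
  match type of Hm0 with ?L = ?R => replace (pd 3 (u 0%nat) a b c t) with
    (pd 3 (u 0%nat) a b c t - (L - R) / dens rho1 phi a b c t) by (rewrite Hm0; field; exact Hd) end.
  match type of Hm1 with ?L = ?R => replace (pd 3 (u 1%nat) a b c t) with
    (pd 3 (u 1%nat) a b c t - (L - R) / dens rho1 phi a b c t) by (rewrite Hm1; field; exact Hd) end.
  match type of Hm2 with ?L = ?R => replace (pd 3 (u 2%nat) a b c t) with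
    (pd 3 (u 2%nat) a b c t - (L - R) / dens rho1 phi a b c t) by (rewrite Hm2; field; exact Hd) end.
  match type of Hch with ?L = ?R => replace (pd 3 phi a b c t) with
    (pd 3 phi a b c t - (L - R)) by (rewrite Hch; ring) end.
  match type of Hch with ?L = ?R => match type of Hms with ?L2 = _ =>
    replace (pd 0 (u 0%nat) a b c t) with
    (pd 0 (u 0%nat) a b c t - (L2 - drho_dphi rho1 * (L - R))
                               / (dens rho1 phi a b c t - drho_dphi rho1 * phi a b c t))
    by (rewrite Hch, Hms; field; unfold dens, drho_dphi, rho2; lra) end end.
  clear Hm0 Hm1 Hm2 Hch Hms.
  remember (dens rho1 phi a b c t) as r eqn:Hr.
  assert (Hphi : phi a b c t = (2 * r - rho1 - 1) / (rho1 - 1)).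
  { rewrite Hr. unfold dens, rho2. field. unfold rho2 in hrho1. lra. }
  rewrite Hphi. clear Hr Hphi.
  unfold drho_dphi, kappa, alpha, rho2 in *. field. repeat split; lra.
Qed.

Lemma ev_continuous E q : smooth_leaves T E -> in_slab T q -> continuous (uncurry4 (ev E)) q.
Proof. now apply eval_continuous. Qed.

Lemma ev_C1_along E k q : smooth_leaves T E -> no_F2 E = true -> in_slab T q -> C1_along k (ev E) q.
Proof.
  intros Hw Hn Hq. split; [|split].
  - now apply ev_continuous.
  - apply (continuous_ext_slab T (ev (dE k E))); [|exact Hq|].
    + intros a b c t Ht. symmetry. now apply pd_ev.
    + apply ev_continuous; [now apply smooth_leaves_dterm | exact Hq].
  - eexists. now apply (eval_is_derive_line T).
Qed.

Lemma continuous3_eval (f : fld) E t : smooth_leaves T E -> 0 < t < T ->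
  (forall a b c t, 0 < t < T -> f a b c t = ev E a b c t) -> continuous3 (fun a b c => f a b c t).
Proof.
  intros Hw Ht Hf. apply continuous3_at_time. intros a b c.
  apply (continuous_ext_slab T (ev E)); [intros; now symmetry; apply Hf | exact Ht | now apply ev_continuous].
Qed.

Lemma energy_density_C1 q : in_slab T q -> C1_along 3 energy_density q.
Proof.
  destruct q as [[[a b] c] t]. intros Ht.
  assert (He : forall a b c t, 0 < t < T -> ev energy_term a b c t = energy_density a b c t)
    by (intros; symmetry; now apply energy_density_eval).
  destruct (ev_C1_along energy_term 3 (a, b, c, t)) as [Hc [Hc' Hd]]; try eval_tac.
  split; [|split].
  - now apply (continuous_ext_slab T (ev energy_term)).
  - apply (continuous_ext_slab T (pd 3 (ev energy_term))); [|exact Ht|exact Hc'].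
    intros; now apply (pd_ext_slab T).
  - apply ex_pd_set_coord, (ex_pd_ext_slab T 3 (ev energy_term)); [exact He | exact Ht |].
    now apply ex_pd_set_coord.
Qed.

Lemma periodic_flux j : (j < 3)%nat -> periodic (ev (flux j)).
Proof.
  intros Hj. apply periodic_eval; [exact hphi_per|].
  cbn [periodic_leaves flux term_sum dterm];
  repeat match goal with |- _ /\ _ => split | |- True => exact I end;
  first [exact hp_per | exact hphi_per | exact hmu_per | apply hu_per; lia].
Qed.

Lemma Int3_pd_flux j t : (j < 3)%nat -> 0 < t < T -> Int3 (fun a b c => pd j (ev (flux j)) a b c t) = 0.
Proof.
  intros Hj Ht.
  assert (HG : forall k, (k < 3)%nat -> forall a b c, C1_along k (ev (flux j)) (a, b, c, t))
    by (intros k _ a b c; apply ev_C1_along; eval_tac).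
  pose proof (periodic_flux j Hj) as Hper.
  destruct_axis j; [apply Int3_pd0_periodic | apply Int3_pd1_periodic | apply Int3_pd2_periodic | lia];
    assumption.
Qed.

Lemma Int3_dt_energy_density t : 0 < t < T ->
  Int3 (fun a b c => dt energy_density a b c t) = - dissipation rho1 F u p phi mu t.
Proof.
  intros Ht.
  rewrite (Int3_ext _ (fun a b c => (-1) * grad_mup_sq a b c t + ((-1) * Ftilde_grad_rho_sq a b c t
      + ((- kappa rho1 ^ 2) * lap_rho_sq a b c t + ((- (1/4)) * curl_u_sq a b c t
      + (pd 0 (ev (flux 0)) a b c t + (pd 1 (ev (flux 1)) a b c t + pd 2 (ev (flux 2)) a b c t)))))))
    by (intros; rewrite energy_balance by exact Ht; ring).
  assert (C1 : continuous3 (fun a b c => grad_mup_sq a b c t))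
    by (apply (continuous3_eval _ grad_mup_sq_term); [eval_tac | exact Ht | apply grad_mup_sq_eval]).
  assert (C2 : continuous3 (fun a b c => Ftilde_grad_rho_sq a b c t))
    by (apply (continuous3_eval _ Ftilde_grad_rho_sq_term);
        [eval_tac | exact Ht | apply Ftilde_grad_rho_sq_eval]).
  assert (C3 : continuous3 (fun a b c => lap_rho_sq a b c t))
    by (apply (continuous3_eval _ lap_rho_sq_term); [eval_tac | exact Ht | apply lap_rho_sq_eval]).
  assert (C4 : continuous3 (fun a b c => curl_u_sq a b c t))
    by (apply (continuous3_eval _ curl_u_sq_term); [eval_tac | exact Ht | intros; apply curl_u_sq_eval]).
  assert (Cflux : forall j, (j < 3)%nat -> continuous3 (fun a b c => pd j (ev (flux j)) a b c t)).
  { intros j Hj. apply (continuous3_eval _ (dE j (flux j)));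
      [apply smooth_leaves_dterm; eval_tac | exact Ht |].
    intros; apply pd_ev; eval_tac. }
  pose proof (Cflux 0%nat ltac:(lia)). pose proof (Cflux 1%nat ltac:(lia)).
  pose proof (Cflux 2%nat ltac:(lia)).
  repeat rewrite Int3_plus by (repeat first [assumption | apply continuous3_scal | apply continuous3_plus]).
  rewrite !Int3_scal by assumption.
  rewrite !Int3_pd_flux by (exact Ht || lia).
  rewrite dissipation_densities. ring.
Qed.

End EnergyIdentity.

Theorem lemma2p4 (rho1 T : R) (F : R -> R) (u : nat -> fld) (p phi mu : fld)
  (hrho1 : 0 < rho1 < rho2) (hT : 0 < T) (hF : C2_on_m11 F)
  (hu_sm : forall i, (i < 3)%nat -> smooth_on (slab T) (u i))
  (hp_sm : smooth_on (slab T) p) (hphi_sm : smooth_on (slab T) phi)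
  (hmu_sm : smooth_on (slab T) mu)
  (hu_per : forall i, (i < 3)%nat -> periodic (u i))
  (hp_per : periodic p) (hphi_per : periodic phi) (hmu_per : periodic mu)
  (hphi_range : forall a b c t, 0 < t < T -> -1 < phi a b c t < 1)
  (hmom : forall i, (i < 3)%nat -> forall a b c t, 0 < t < T ->
     dt (fun a' b' c' t' => dens rho1 phi a' b' c' t' * u i a' b' c' t') a b c t
     + sum3 (fun j => pd j (fun a' b' c' t' =>
           dens rho1 phi a' b' c' t' * u i a' b' c' t' * u j a' b' c' t') a b c t)
     + pd i p a b c t
     = sum3 (fun j => pd j (fun a' b' c' t' =>
           dens rho1 phi a' b' c' t' *
             ((pd j (u i) a' b' c' t' + pd i (u j) a' b' c' t') / 2)) a b c t)
       - phi a b c t * pd i mu a b c t)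
  (hmass : forall a b c t, 0 < t < T ->
     dt (dens rho1 phi) a b c t
     + sum3 (fun j => pd j (fun a' b' c' t' =>
           dens rho1 phi a' b' c' t' * u j a' b' c' t') a b c t) = 0)
  (hCH : forall a b c t, 0 < t < T ->
     dt phi a b c t
     + sum3 (fun j => pd j (fun a' b' c' t' => phi a' b' c' t' * u j a' b' c' t') a b c t)
     = lap (fun a' b' c' t' => mu a' b' c' t' + alpha rho1 * p a' b' c' t') a b c t)
  (hmu : forall a b c t, 0 < t < T ->
     mu a b c t = - lap phi a b c t + Derive F (phi a b c t)) :
  forall t, 0 < t < T ->
    is_derive (energy rho1 F u phi) t (- dissipation rho1 F u p phi mu t).
Proof.
  intros t Ht.
  rewrite <- (Int3_dt_energy_density rho1 T F u p phi mu); auto.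
  apply (is_derive_Int3_time T (energy_density rho1 F u phi)); [|exact Ht].
  intros q Hq. now apply (energy_density_C1 rho1 T F u phi).
Qed.
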